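(* Let $M$ be two-dimensional Misner spacetime: the quotient of $\mathbb M_+=\{(t,x)\in\mathbb R^2: t+x>0\}$ with metric $-dt^2+dx^2$ by the discrete isometry group generated by the boost $(t,x)\mapsto(t\cosh\xi_0+x\sinh\xi_0,\ t\sinh\xi_0+x\cosh\xi_0)$ for a fixed $\xi_0>0$ (equivalently $\mathbb R\times S^1$ with coordinates $\tau=\frac14(t^2-x^2)$, $\psi=\ln(t+x)^2-\ln4$ and metric $2\,d\tau\,d\psi+\tau\,d\psi^2$). Then $\mathcal N_p=N_p$ for every $p\in M$.
   Context: $OM$ is the pseudo-orthonormal frame bundle with projection $\pi$, equipped with the b-metric $G(X,Y)=\langle\boldsymbol\theta(X),\boldsymbol\theta(Y)\rangle+\langle\boldsymbol\omega(X),\boldsymbol\omega(Y)\rangle$ ($\boldsymbol\theta$ canonical form, $\boldsymbol\omega$ Levi-Civita connection form, Euclidean inner products relative to fixed bases); $l(\mu)$ is the $G$-length of a curve in $OM$. $\tilde d_{M}(p,q)=\inf\{l(\mu):\mu\colon[0,1]\to OM,\ \pi(\mu(0))=p,\ \pi(\mu(1))=q\}$, $\mathcal N_p=\{q:\tilde d_M(p,q)=0\}$, and $N_p$ is the set of points joined to $p$ by null geodesics in $M$. *)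

From Stdlib Require Import Reals ZArith.
From Coquelicot Require Import Coquelicot.
Open Scope R_scope.

Definition eta (u v : R * R) : R := - fst u * fst v + snd u * snd v.

Definition InMplus (p : R * R) : Prop := 0 < fst p + snd p.

Definition boost (xi : R) (p : R * R) : R * R :=
  (fst p * cosh xi + snd p * sinh xi, fst p * sinh xi + snd p * cosh xi).

(* The k-th element (k : Z) of the deck group generated by boost xi0:
   (boost xi0)^k = boost (k * xi0). *)
Definition deck (xi0 : R) (k : Z) (p : R * R) : R * R := boost (IZR k * xi0) p.

(* Misner spacetime M = M_+ / <boost xi0>.  A point of M is represented by any
   p with InMplus p; p and q represent the same point iff q = deck xi0 k p. *)

(* C^1 real function (on all of R; curves are used on [0,1]). *)
Definition C1 (f : R -> R) : Prop :=
  (forall s, ex_derive f s) /\ (forall s, continuous (Derive f) s).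

Definition C1_2 (g : R -> R * R) : Prop :=
  C1 (fun s => fst (g s)) /\ C1 (fun s => snd (g s)).

Definition D2 (g : R -> R * R) (s : R) : R * R :=
  (Derive (fun u => fst (g u)) s, Derive (fun u => snd (g u)) s).

(* Since M_+ is an open subset of Minkowski
   space with its global inertial chart, O(M_+) = M_+ x {such frames}. *)
Definition frame_ok (e0 e1 : R * R) : Prop :=
  eta e0 e0 = -1 /\ eta e1 e1 = 1 /\ eta e0 e1 = 0.

Definition OInMplus_curve (c e0 e1 : R -> R * R) : Prop :=
  C1_2 c /\ C1_2 e0 /\ C1_2 e1 /\
  (forall s, 0 <= s <= 1 -> InMplus (c s) /\ frame_ok (e0 s) (e1 s)).

(* Canonical form theta(mu') : components of c' in the frame (e0,e1),
   c' = theta0 e0 + theta1 e1. *)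
Definition theta0 (c e0 : R -> R * R) (s : R) : R := - eta (D2 c s) (e0 s).
Definition theta1 (c e1 : R -> R * R) (s : R) : R := eta (D2 c s) (e1 s).
(* Levi-Civita connection form omega(mu') in o(1,1) = R.B with
   B = [[0,1],[1,0]] : e0' = w e1, e1' = w e0, where w = eta(e0', e1). *)
Definition omega (e0 e1 : R -> R * R) (s : R) : R := eta (D2 e0 s) (e1 s).

(* G(mu',mu') = <theta,theta> + <omega,omega>  (Euclidean, fixed bases). *)
Definition Gsq (c e0 e1 : R -> R * R) (s : R) : R :=
  (theta0 c e0 s) ^ 2 + (theta1 c e1 s) ^ 2 + (omega e0 e1 s) ^ 2.

Definition blength (c e0 e1 : R -> R * R) : R :=
  RInt (fun s => sqrt (Gsq c e0 e1 s)) 0 1.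

(* Curves in OM = O(M_+)/deck group are exactly projections of curves in
   O(M_+) (with equal G-length); pi(mu(0)) = [p] and pi(mu(1)) = [q] means the
   lifted curve starts over some deck translate of p and ends over some deck
   translate of q. *)
Definition dtilde (xi0 : R) (p q : R * R) : Rbar :=
  Glb_Rbar (fun l => exists (c e0 e1 : R -> R * R) (j k : Z),
     OInMplus_curve c e0 e1 /\ c 0 = deck xi0 j p /\ c 1 = deck xi0 k q /\
     l = blength c e0 e1).

Definition calN (xi0 : R) (p q : R * R) : Prop := dtilde xi0 p q = Finite 0.

(* A null geodesic gamma : [0,1] -> M_+ (lifted to the cover): C^2, geodesic
   equation gamma'' = 0 (Christoffel symbols vanish in the inertial chart),
   and eta(gamma', gamma') = 0. *)
Definition null_geodesic (g : R -> R * R) : Prop :=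
  C1_2 g /\ C1_2 (D2 g) /\
  (forall s, 0 <= s <= 1 -> InMplus (g s) /\ D2 (D2 g) s = (0, 0) /\
                             eta (D2 g s) (D2 g s) = 0).

Definition Np (xi0 : R) (p q : R * R) : Prop :=
  exists (g : R -> R * R) (j k : Z),
    null_geodesic g /\ g 0 = deck xi0 j p /\ g 1 = deck xi0 k q.

(* The b-length controls how far a lifted curve can move off the light cone: in the moving
   frame, the null components X, Y of the displacement c(s) - c(0) satisfy
   (X^2 + Y^2 + 1)' <= 4 |mu'|_G (X^2 + Y^2 + 1), while X Y is minus the interval of the
   displacement, so a curve of b-length L joins points whose interval is at most
   (e^{4L} - 1)/2 in absolute value.  Hence dtilde(p, q) = 0 forces the intervals between p
   and the deck translates of q, namely -(e^{m xi0} u_q - u_p)(e^{-m xi0} v_q - v_p) in null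
   coordinates, to accumulate at 0.  As m -> +-oo they tend to a nonzero limit or to infinity,
   so one of them vanishes, and the straight segment to that translate is a null geodesic.
   Conversely, along a null segment a frame boosted far enough makes the b-length arbitrarily
   small. *)

From Pilot Require Import Defs.
From Stdlib Require Import Reals ZArith Lra Lia Psatz Classical.
From Coquelicot Require Import Coquelicot.
Open Scope R_scope.

(** * Null coordinates and the deck group *)

Definition lcu (P : R * R) : R := fst P + snd P.
Definition lcv (P : R * R) : R := fst P - snd P.
Definition vsub (P Q : R * R) : R * R := (fst P - fst Q, snd P - snd Q).
Definition interval (P Q : R * R) : R := eta (vsub P Q) (vsub P Q).

Lemma pair_eq_lc (P Q : R * R) : lcu P = lcu Q -> lcv P = lcv Q -> P = Q.
Proof.
  destruct P as [t x], Q as [t' x']; unfold lcu, lcv; simpl; intros Hu Hv.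
  f_equal; lra.
Qed.

Lemma interval_lc (P Q : R * R) :
  interval P Q = - ((lcu P - lcu Q) * (lcv P - lcv Q)).
Proof. unfold interval, eta, vsub, lcu, lcv; simpl; ring. Qed.

Lemma lcu_boost th P : lcu (boost th P) = exp th * lcu P.
Proof.
  unfold lcu, boost, cosh, sinh; simpl. rewrite exp_Ropp.
  field. apply Rgt_not_eq, exp_pos.
Qed.

Lemma lcv_boost th P : lcv (boost th P) = exp (- th) * lcv P.
Proof.
  unfold lcv, boost, cosh, sinh; simpl. rewrite exp_Ropp.
  field. apply Rgt_not_eq, exp_pos.
Qed.

Lemma boost_add a b P : boost (a + b) P = boost a (boost b P).
Proof.
  apply pair_eq_lc.
  - rewrite !lcu_boost, exp_plus; ring.
  - rewrite !lcv_boost, Ropp_plus_distr, exp_plus; ring.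
Qed.

Lemma interval_boost th P Q : interval (boost th P) (boost th Q) = interval P Q.
Proof.
  rewrite !interval_lc, !lcu_boost, !lcv_boost.
  transitivity (- ((exp th * exp (- th)) * ((lcu P - lcu Q) * (lcv P - lcv Q)))); [ring|].
  rewrite <- exp_plus, Rplus_opp_r, exp_0; ring.
Qed.

Lemma deck_0 xi0 P : deck xi0 0 P = P.
Proof.
  apply pair_eq_lc; unfold deck;
    rewrite ?lcu_boost, ?lcv_boost, Rmult_0_l, ?Ropp_0, exp_0; ring.
Qed.

Lemma deck_add xi0 j m P : deck xi0 (j + m) P = deck xi0 j (deck xi0 m P).
Proof. unfold deck. rewrite <- boost_add, plus_IZR, Rmult_plus_distr_r. reflexivity. Qed.

Lemma InMplus_deck xi0 k P : InMplus P -> InMplus (deck xi0 k P).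
Proof.
  unfold InMplus; intros HP. fold (lcu (deck xi0 k P)). unfold deck.
  rewrite lcu_boost. apply Rmult_lt_0_compat; [apply exp_pos | exact HP].
Qed.

Lemma interval_deck xi0 j k P Q :
  interval (deck xi0 k Q) (deck xi0 j P) = interval (deck xi0 (k - j) Q) P.
Proof.
  replace k with (j + (k - j))%Z at 1 by lia.
  rewrite deck_add. unfold deck at 1 3. apply interval_boost.
Qed.

Definition deck_gap (xi a b c d : R) (m : Z) : R :=
  (exp (IZR m * xi) * a - b) * (exp (- (IZR m * xi)) * c - d).

Lemma interval_deck_lc xi0 m P Q :
  interval (deck xi0 m Q) P = - deck_gap xi0 (lcu Q) (lcu P) (lcv Q) (lcv P) m.
Proof. rewrite interval_lc. unfold deck, deck_gap. rewrite lcu_boost, lcv_boost. reflexivity. Qed.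

(** * The deck intervals cannot accumulate at zero *)

Lemma affine_eventually_ge (a b : R) : a <> 0 ->
  exists X, 1 <= X /\ forall x, X <= x -> Rabs a * x / 2 <= Rabs (x * a - b).
Proof.
  intros Ha. pose proof (Rabs_pos_lt a Ha) as Ha'.
  exists (Rmax 1 (2 * Rabs b / Rabs a)). split; [apply Rmax_l|].
  intros x Hx. pose proof (Rmax_l 1 (2 * Rabs b / Rabs a)).
  pose proof (Rmax_r 1 (2 * Rabs b / Rabs a)).
  assert (Hb : 2 * Rabs b <= x * Rabs a).
  { replace (2 * Rabs b) with (2 * Rabs b / Rabs a * Rabs a) by (field; lra).
    apply Rmult_le_compat_r; lra. }
  pose proof (Rabs_triang_inv (x * a) b).
  rewrite Rabs_mult, (Rabs_right x) in * by lra. lra.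
Qed.

Lemma recip_affine_eventually_ge (c d : R) :
  exists X, 1 <= X /\ forall x, X <= x -> Rabs d / 2 <= Rabs (c / x - d).
Proof.
  destruct (Req_dec d 0) as [->|Hd].
  { exists 1. split; [lra|]. intros x _. rewrite Rabs_R0. pose proof (Rabs_pos (c / x - 0)). lra. }
  pose proof (Rabs_pos_lt d Hd) as Hd'.
  exists (Rmax 1 (2 * Rabs c / Rabs d)). split; [apply Rmax_l|].
  intros x Hx. pose proof (Rmax_l 1 (2 * Rabs c / Rabs d)).
  pose proof (Rmax_r 1 (2 * Rabs c / Rabs d)).
  assert (Hcx : 2 * Rabs c <= x * Rabs d).
  { replace (2 * Rabs c) with (2 * Rabs c / Rabs d * Rabs d) by (field; lra).
    apply Rmult_le_compat_r; lra. }
  assert (Hc : Rabs (c / x) <= Rabs d / 2).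
  { unfold Rdiv. rewrite Rabs_mult, Rabs_inv, (Rabs_right x) by lra.
    pose proof (Rinv_r x ltac:(lra)). pose proof (Rinv_0_lt_compat x ltac:(lra)). nra. }
  pose proof (Rabs_triang_inv d (c / x)). rewrite Rabs_minus_sym. lra.
Qed.

(* [(x a - b)(c / x - d)] tends to [a c] or to infinity when [a <> 0], and to [b d] when [a = 0]. *)
Lemma eventually_away_from_zero a b c d :
  (a <> 0 /\ (c <> 0 \/ d <> 0)) \/ (b <> 0 /\ d <> 0) ->
  exists X del, 0 < del /\ forall x, X <= x -> del <= Rabs ((x * a - b) * (c / x - d)).
Proof.
  intros Habcd. destruct (Req_dec a 0) as [->|Ha].
  - destruct Habcd as [[Ha _]|[Hb Hd]]; [easy|].
    destruct (recip_affine_eventually_ge c d) as [X [_ HX]].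
    exists X, (Rabs b * Rabs d / 2). split.
    { apply Rabs_pos_lt in Hb, Hd. apply Rmult_lt_0_compat; [nra|lra]. }
    intros x Hx. rewrite Rabs_mult. replace (x * 0 - b) with (- b) by ring.
    rewrite Rabs_Ropp. specialize (HX x Hx). pose proof (Rabs_pos b). nra.
  - destruct (affine_eventually_ge a b Ha) as [X1 [HX1 H1]].
    destruct (Req_dec d 0) as [->|Hd].
    + assert (Hc : c <> 0) by (destruct Habcd as [[_ [Hc|Hd]]|[_ Hd]]; easy).
      destruct (recip_affine_eventually_ge b a) as [X2 [HX2 H2]].
      exists X2, (Rabs a * Rabs c / 2). split.
      { apply Rabs_pos_lt in Ha, Hc. apply Rmult_lt_0_compat; [nra|lra]. }
      intros x Hx. specialize (H2 x Hx).
      replace ((x * a - b) * (c / x - 0)) with (- (b / x - a) * c) by (field; lra).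
      rewrite Rabs_mult, Rabs_Ropp. pose proof (Rabs_pos c). nra.
    + destruct (recip_affine_eventually_ge c d) as [X2 [_ H2]].
      exists (Rmax X1 X2), (Rabs a * Rabs d / 4). split.
      { apply Rabs_pos_lt in Ha, Hd. apply Rmult_lt_0_compat; [nra|lra]. }
      intros x Hx. pose proof (Rmax_l X1 X2). pose proof (Rmax_r X1 X2).
      specialize (H1 x ltac:(lra)). specialize (H2 x ltac:(lra)).
      assert (Rabs a / 2 <= Rabs (x * a - b)).
      { pose proof (Rabs_pos a). nra. }
      rewrite Rabs_mult. pose proof (Rabs_pos a). pose proof (Rabs_pos d). nra.
Qed.

Lemma exp_Zmul_eventually_ge xi X : 0 < xi ->
  exists M : Z, forall m : Z, (M <= m)%Z -> X <= exp (IZR m * xi).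
Proof.
  intros Hxi. exists (up (Rabs X / xi)). intros m Hm.
  destruct (archimed (Rabs X / xi)) as [Hup _].
  assert (HmX : Rabs X <= IZR m * xi).
  { replace (Rabs X) with (Rabs X / xi * xi) by (field; lra).
    apply Rmult_le_compat_r; [lra|]. apply IZR_le in Hm. lra. }
  pose proof (exp_ineq1_le (IZR m * xi)). pose proof (Rle_abs X). lra.
Qed.

Lemma nonvanishing_bounded_below (f : Z -> R) : (forall m, f m <> 0) ->
  forall n : nat, exists del, 0 < del /\
    forall m : Z, (- Z.of_nat n <= m <= Z.of_nat n)%Z -> del <= Rabs (f m).
Proof.
  intros Hf n. induction n as [|n [del [Hdel IH]]].
  - exists (Rabs (f 0%Z)). split; [apply Rabs_pos_lt, Hf|].
    intros m Hm. replace m with 0%Z by lia. lra.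
  - set (M := Z.of_nat (S n)).
    exists (Rmin del (Rmin (Rabs (f M)) (Rabs (f (- M)%Z)))). split.
    { apply Rmin_glb_lt; [lra | apply Rmin_glb_lt; apply Rabs_pos_lt, Hf]. }
    intros m Hm.
    pose proof (Rmin_l del (Rmin (Rabs (f M)) (Rabs (f (- M)%Z)))).
    pose proof (Rmin_r del (Rmin (Rabs (f M)) (Rabs (f (- M)%Z)))).
    pose proof (Rmin_l (Rabs (f M)) (Rabs (f (- M)%Z))).
    pose proof (Rmin_r (Rabs (f M)) (Rabs (f (- M)%Z))).
    destruct (Z.eq_dec m M) as [->|HM]; [lra|].
    destruct (Z.eq_dec m (- M)) as [->|HM']; [lra|].
    specialize (IH m ltac:(unfold M in *; lia)). lra.
Qed.

Lemma deck_gap_vanishes xi a b c d : 0 < xi -> 0 < a -> 0 < b ->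
  (forall e, 0 < e -> exists m : Z, Rabs (deck_gap xi a b c d m) < e) ->
  exists m : Z, deck_gap xi a b c d m = 0.
Proof.
  intros Hxi Ha Hb Hsmall. apply NNPP. intros Hnone.
  assert (Hnz : forall m, deck_gap xi a b c d m <> 0) by eauto.
  assert (Hcd : c <> 0 \/ d <> 0).
  { destruct (Req_dec c 0) as [->|]; [|tauto]. destruct (Req_dec d 0) as [->|]; [|tauto].
    exfalso. apply (Hnz 0%Z). unfold deck_gap. ring. }
  destruct (eventually_away_from_zero a b c d) as [X [del1 [Hdel1 HX]]]; [left; lra|].
  destruct (eventually_away_from_zero c d a b) as [Y [del2 [Hdel2 HY]]].
  { destruct (Req_dec c 0); [right; destruct Hcd | left]; split; lra || tauto. }
  destruct (exp_Zmul_eventually_ge xi X Hxi) as [M1 HM1].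
  destruct (exp_Zmul_eventually_ge xi Y Hxi) as [M2 HM2].
  destruct (nonvanishing_bounded_below _ Hnz (Z.to_nat (Z.max M1 M2)))
    as [del3 [Hdel3 Hmid]].
  pose proof (Rmin_l del1 (Rmin del2 del3)). pose proof (Rmin_r del1 (Rmin del2 del3)).
  pose proof (Rmin_l del2 del3). pose proof (Rmin_r del2 del3).
  set (del := Rmin del1 (Rmin del2 del3)) in *.
  assert (Hdel : 0 < del) by (apply Rmin_glb_lt; [lra | apply Rmin_glb_lt; lra]).
  destruct (Hsmall del Hdel) as [m Hm].
  destruct (Z_le_gt_dec M1 m) as [Hm1|Hm1].
  { specialize (HX _ (HM1 m Hm1)).
    replace (deck_gap xi a b c d m)
      with ((exp (IZR m * xi) * a - b) * (c / exp (IZR m * xi) - d)) in Hm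
      by (unfold deck_gap; rewrite exp_Ropp; unfold Rdiv; ring).
    lra. }
  destruct (Z_le_gt_dec m (- M2)) as [Hm2|Hm2].
  { specialize (HY _ (HM2 (- m)%Z ltac:(lia))).
    rewrite opp_IZR, <- Ropp_mult_distr_l in HY.
    replace (deck_gap xi a b c d m)
      with ((exp (- (IZR m * xi)) * c - d) * (a / exp (- (IZR m * xi)) - b)) in Hm
      by (unfold deck_gap; rewrite (exp_Ropp (IZR m * xi)); field; apply Rgt_not_eq, exp_pos).
    lra. }
  specialize (Hmid m ltac:(lia)). lra.
Qed.

(** * The b-length bounds the interval between the endpoints *)

Lemma frame_ok_lc e0 e1 : frame_ok e0 e1 -> lcu e0 * lcv e0 = 1.
Proof. intros [H0 _]. unfold eta, lcu, lcv in *. lra. Qed.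

Lemma frame_ok_e1 e0 e1 : frame_ok e0 e1 ->
  exists eps, eps * eps = 1 /\ e1 = (eps * snd e0, eps * fst e0).
Proof.
  destruct e0 as [a1 a2], e1 as [b1 b2]. unfold frame_ok, eta; simpl.
  intros [H1 [H2 H3]].
  assert (Ha : a1 <> 0) by nra.
  assert (Hb : (b2 - a1) * (b2 + a1) = 0).
  { assert (b1 * b1 * (a1 * a1) = a2 * a2 * (b2 * b2)).
    { replace (b1 * b1 * (a1 * a1)) with ((a1 * b1) * (a1 * b1)) by ring.
      replace (a1 * b1) with (a2 * b2) by lra. ring. }
    nra. }
  apply Rmult_integral in Hb. destruct Hb as [Hb|Hb].
  - exists 1. assert (b1 = a2) by (apply (Rmult_eq_reg_l a1); [nra | easy]).
    split; [ring | f_equal; lra].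
  - exists (-1). assert (b1 = - a2) by (apply (Rmult_eq_reg_l a1); [nra | easy]).
    split; [ring | f_equal; lra].
Qed.

Lemma Rabs_le_sqrt t S : t ^ 2 <= S -> Rabs t <= sqrt S.
Proof. intros H. rewrite <- sqrt_Rsqr_abs. apply sqrt_le_1_alt. unfold Rsqr. lra. Qed.

(* In null coordinates, the canonical form and the connection form measured in the frame
   [(e0, e1)] are, up to the sign [eps], sums and differences of the three rates below. *)
Lemma frame_rates_bound dc de0 e0 e1 :
  frame_ok e0 e1 -> lcu de0 * lcv e0 + lcu e0 * lcv de0 = 0 ->
  let l := sqrt ((- eta dc e0) ^ 2 + (eta dc e1) ^ 2 + (eta de0 e1) ^ 2) in
  Rabs (lcu dc * lcv e0) <= 2 * l /\ Rabs (lcv dc * lcu e0) <= 2 * l /\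
  Rabs (lcv de0 * lcu e0) <= l.
Proof.
  intros Hfr Hunit l. destruct (frame_ok_e1 e0 e1 Hfr) as [eps [Heps ->]].
  set (t0 := - eta dc e0) in l. set (t1 := eta dc (eps * snd e0, eps * fst e0)) in l.
  set (om := eta de0 (eps * snd e0, eps * fst e0)) in l.
  pose proof (pow2_ge_0 t0). pose proof (pow2_ge_0 t1). pose proof (pow2_ge_0 om).
  assert (Ht0 : Rabs t0 <= l) by (apply Rabs_le_sqrt; lra).
  assert (Ht1 : Rabs t1 <= l) by (apply Rabs_le_sqrt; lra).
  assert (Hom : Rabs om <= l) by (apply Rabs_le_sqrt; lra).
  assert (Habs : Rabs eps = 1).
  { assert (Rabs eps * Rabs eps = 1) by (rewrite <- Rabs_mult, Heps; apply Rabs_R1).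
    pose proof (Rabs_pos eps). nra. }
  assert (E1 : lcu dc * lcv e0 = t0 + eps * t1).
  { transitivity (t0 + eps * t1 + (1 - eps * eps) * (lcu dc * lcv e0 - t0)).
    - unfold t0, t1, eta, lcu, lcv; simpl; ring.
    - rewrite Heps; ring. }
  assert (E2 : lcv dc * lcu e0 = t0 - eps * t1).
  { transitivity (t0 - eps * t1 + (1 - eps * eps) * (lcv dc * lcu e0 - t0)).
    - unfold t0, t1, eta, lcu, lcv; simpl; ring.
    - rewrite Heps; ring. }
  assert (E3 : lcv de0 * lcu e0 = - (eps * om)).
  { transitivity (- (eps * om) + (1 - eps * eps) * (lcv de0 * lcu e0)
                  + eps * eps * (lcu de0 * lcv e0 + lcu e0 * lcv de0) / 2).
    - unfold om, eta, lcu, lcv; simpl; field.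
    - rewrite Heps, Hunit; field. }
  rewrite E1, E2, E3, Rabs_Ropp, Rabs_mult, Habs.
  pose proof (Rabs_triang t0 (eps * t1)). pose proof (Rabs_triang t0 (- (eps * t1))).
  rewrite Rabs_Ropp, Rabs_mult, Habs in *. unfold Rminus. lra.
Qed.

Lemma lyapunov_rate X Y T1 T2 Z l :
  Rabs T1 <= 2 * l -> Rabs T2 <= 2 * l -> Rabs Z <= l ->
  X * (T1 + X * Z) + Y * (T2 - Y * Z) <= 2 * l * (X ^ 2 + Y ^ 2 + 1).
Proof.
  intros H1 H2 HZ.
  assert (Hl : 0 <= l) by (pose proof (Rabs_pos Z); lra).
  assert (HX : X * T1 <= l * (X ^ 2 + 1)).
  { pose proof (Rle_abs (X * T1)). rewrite Rabs_mult in H.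
    pose proof (Rabs_pos X). pose proof (pow2_ge_0 (Rabs X - 1)).
    rewrite <- (pow2_abs X). nra. }
  assert (HY : Y * T2 <= l * (Y ^ 2 + 1)).
  { pose proof (Rle_abs (Y * T2)). rewrite Rabs_mult in H.
    pose proof (Rabs_pos Y). pose proof (pow2_ge_0 (Rabs Y - 1)).
    rewrite <- (pow2_abs Y). nra. }
  pose proof (Rle_abs Z). pose proof (Rle_abs (- Z)). rewrite Rabs_Ropp in *.
  pose proof (pow2_ge_0 X). pose proof (pow2_ge_0 Y). nra.
Qed.

Lemma gronwall_unit (f f' K k : R -> R) :
  (forall s, 0 <= s <= 1 -> is_derive f s (f' s)) ->
  (forall s, 0 <= s <= 1 -> is_derive K s (k s)) ->
  (forall s, 0 < s < 1 -> f' s <= k s * f s) ->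
  f 1 <= f 0 * exp (K 1 - K 0).
Proof.
  intros Hf HK Hrate.
  set (W := fun s => f s * exp (- K s)).
  set (W' := fun s => (f' s - k s * f s) * exp (- K s)).
  assert (HW : forall s, 0 <= s <= 1 -> is_derive W s (W' s)).
  { intros s Hs. unfold W, W'. auto_derive.
    - split; [exists (f' s); apply Hf, Hs | split; [exists (k s); apply HK, Hs | easy]].
    - change (fun x : R => f x) with f. change (fun x : R => K x) with K.
      rewrite (is_derive_unique f _ _ (Hf s Hs)), (is_derive_unique K _ _ (HK s Hs)).
      ring. }
  destruct (MVT_cor2 W W' 0 1 ltac:(lra)) as [z [Hz Hz01]].
  { intros s Hs. apply is_derive_Reals, HW, Hs. }
  assert (HW'z : W' z <= 0).
  { unfold W'. pose proof (Hrate z Hz01). pose proof (exp_pos (- K z)). nra. }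
  assert (HW10 : W 1 <= W 0) by lra.
  unfold W in HW10. rewrite Rminus_def, exp_plus.
  pose proof (exp_pos (K 1)).
  replace (f 1) with (f 1 * exp (- K 1) * exp (K 1))
    by (rewrite Rmult_assoc, <- exp_plus, Rplus_opp_l, exp_0; ring).
  rewrite (Rmult_comm (exp (K 1))), <- Rmult_assoc. apply Rmult_le_compat_r; lra.
Qed.

Lemma continuous_Rmult (f g : R -> R) x :
  continuous f x -> continuous g x -> continuous (fun y => f y * g y) x.
Proof. exact (continuous_mult f g x). Qed.

Lemma continuous_Rplus (f g : R -> R) x :
  continuous f x -> continuous g x -> continuous (fun y => f y + g y) x.
Proof. exact (continuous_plus f g x). Qed.

Lemma continuous_Ropp (f : R -> R) x : continuous f x -> continuous (fun y => - f y) x.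
Proof. exact (continuous_opp f x). Qed.

Lemma is_derive_Rmult (f g : R -> R) s df dg :
  is_derive f s df -> is_derive g s dg ->
  is_derive (fun u => f u * g u) s (df * g s + f s * dg).
Proof. intros Hf Hg. exact (is_derive_mult f g s df dg Hf Hg Rmult_comm). Qed.

Lemma is_derive_Rminus_const (f : R -> R) s k df :
  is_derive f s df -> is_derive (fun u => f u - k) s df.
Proof.
  intros Hf. rewrite <- (Rminus_0_r df).
  exact (is_derive_minus f (fun _ => k) s df 0 Hf (is_derive_const k s)).
Qed.

Lemma is_derive_lcu g s : C1_2 g -> is_derive (fun u => lcu (g u)) s (lcu (D2 g s)).
Proof.
  intros [[Hg1 _] [Hg2 _]]. unfold lcu, D2; simpl.
  apply (is_derive_plus (fun u => fst (g u)) (fun u => snd (g u))); apply Derive_correct; auto.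
Qed.

Lemma is_derive_lcv g s : C1_2 g -> is_derive (fun u => lcv (g u)) s (lcv (D2 g s)).
Proof.
  intros [[Hg1 _] [Hg2 _]]. unfold lcv, D2; simpl.
  apply (is_derive_minus (fun u => fst (g u)) (fun u => snd (g u))); apply Derive_correct; auto.
Qed.

Section CurveEstimate.

Variables c e0 e1 : R -> R * R.
Hypothesis Hmu : OInMplus_curve c e0 e1.

(* Null components of the displacement [c s - c 0] in the moving frame; their product is
   minus its interval because [lcu e0 * lcv e0 = 1]. *)
Definition frame_disp_u (s : R) : R := (lcu (c s) - lcu (c 0)) * lcv (e0 s).
Definition frame_disp_v (s : R) : R := (lcv (c s) - lcv (c 0)) * lcu (e0 s).

Lemma Gsq_sqrt_continuous s : continuous (fun u => sqrt (Gsq c e0 e1 u)) s.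
Proof.
  destruct Hmu as [[[Hc1 Hc1'] [Hc2 Hc2']] [[[Ha1 Ha1'] [Ha2 Ha2']] [[[Hb1 _] [Hb2 _]] _]]].
  apply continuous_sqrt_comp. unfold Gsq, theta0, theta1, omega, eta, D2; simpl.
  repeat match goal with
  | |- continuous (fun _ => _ + _) _ => apply continuous_Rplus
  | |- continuous (fun _ => _ * _) _ => apply continuous_Rmult
  | |- continuous (fun _ => _ ^ 2) _ => apply continuous_Rmult
  | |- continuous (fun _ => - _) _ => apply continuous_Ropp
  | |- continuous (fun _ => 1) _ => apply continuous_const
  | |- continuous (Derive (fun _ => fst (c _))) _ => apply Hc1'
  | |- continuous (Derive (fun _ => snd (c _))) _ => apply Hc2'
  | |- continuous (Derive (fun _ => fst (e0 _))) _ => apply Ha1'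
  | |- continuous (Derive (fun _ => snd (e0 _))) _ => apply Ha2'
  | |- continuous (fun _ => fst (e0 _)) _ => exact (ex_derive_continuous _ _ (Ha1 _))
  | |- continuous (fun _ => snd (e0 _)) _ => exact (ex_derive_continuous _ _ (Ha2 _))
  | |- continuous (fun _ => fst (e1 _)) _ => exact (ex_derive_continuous _ _ (Hb1 _))
  | |- continuous (fun _ => snd (e1 _)) _ => exact (ex_derive_continuous _ _ (Hb2 _))
  end.
Qed.

Lemma frame_lc_unit s : 0 <= s <= 1 -> lcu (e0 s) * lcv (e0 s) = 1.
Proof. intros Hs. destruct Hmu as [_ [_ [_ Hfr]]]. exact (frame_ok_lc _ _ (proj2 (Hfr s Hs))). Qed.

Lemma frame_lc_unit_rate s : 0 < s < 1 ->
  lcu (D2 e0 s) * lcv (e0 s) + lcu (e0 s) * lcv (D2 e0 s) = 0.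
Proof.
  intros Hs. destruct Hmu as [_ [He0 _]].
  assert (Hprod := is_derive_Rmult _ _ s _ _ (is_derive_lcu e0 s He0) (is_derive_lcv e0 s He0)).
  assert (Hconst : is_derive (fun u => lcu (e0 u) * lcv (e0 u)) s 0).
  { apply (is_derive_ext_loc (fun _ => 1)); [|apply (is_derive_const 1)].
    apply (locally_interval _ s 0 1); simpl; try lra.
    intros u Hu0 Hu1. symmetry. apply frame_lc_unit. lra. }
  rewrite <- (is_derive_unique _ _ _ Hprod). exact (is_derive_unique _ _ _ Hconst).
Qed.

Definition frame_disp_u_rate (s : R) : R :=
  lcu (D2 c s) * lcv (e0 s) + (lcu (c s) - lcu (c 0)) * lcv (D2 e0 s).
Definition frame_disp_v_rate (s : R) : R :=
  lcv (D2 c s) * lcu (e0 s) + (lcv (c s) - lcv (c 0)) * lcu (D2 e0 s).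

Lemma is_derive_frame_disp_u s : is_derive frame_disp_u s (frame_disp_u_rate s).
Proof.
  destruct Hmu as [Hc [He0 _]].
  exact (is_derive_Rmult _ _ s _ _
           (is_derive_Rminus_const _ s _ _ (is_derive_lcu c s Hc)) (is_derive_lcv e0 s He0)).
Qed.

Lemma is_derive_frame_disp_v s : is_derive frame_disp_v s (frame_disp_v_rate s).
Proof.
  destruct Hmu as [Hc [He0 _]].
  exact (is_derive_Rmult _ _ s _ _
           (is_derive_Rminus_const _ s _ _ (is_derive_lcv c s Hc)) (is_derive_lcu e0 s He0)).
Qed.

Lemma frame_disp_rate_bound s : 0 < s < 1 ->
  frame_disp_u s * frame_disp_u_rate s + frame_disp_v s * frame_disp_v_rate s
  <= 2 * sqrt (Gsq c e0 e1 s) * (frame_disp_u s ^ 2 + frame_disp_v s ^ 2 + 1).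
Proof.
  intros Hs. destruct Hmu as [_ [_ [_ Hfr]]].
  assert (Hunit := frame_lc_unit s ltac:(lra)).
  assert (Hrate := frame_lc_unit_rate s Hs).
  destruct (frame_rates_bound (D2 c s) (D2 e0 s) (e0 s) (e1 s) (proj2 (Hfr s ltac:(lra))) Hrate)
    as [H1 [H2 H3]].
  set (Z := lcv (D2 e0 s) * lcu (e0 s)) in H3.
  assert (EU : frame_disp_u_rate s = lcu (D2 c s) * lcv (e0 s) + frame_disp_u s * Z).
  { unfold frame_disp_u_rate, frame_disp_u, Z.
    transitivity (lcu (D2 c s) * lcv (e0 s)
      + (lcu (c s) - lcu (c 0)) * lcv (D2 e0 s) * (lcu (e0 s) * lcv (e0 s)));
      [rewrite Hunit; ring | ring]. }
  assert (EV : frame_disp_v_rate s = lcv (D2 c s) * lcu (e0 s) - frame_disp_v s * Z).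
  { unfold frame_disp_v_rate, frame_disp_v, Z.
    transitivity (lcv (D2 c s) * lcu (e0 s)
      + (lcv (c s) - lcv (c 0)) * lcu (D2 e0 s) * (lcu (e0 s) * lcv (e0 s)));
      [rewrite Hunit; ring|].
    transitivity (lcv (D2 c s) * lcu (e0 s)
      + (lcv (c s) - lcv (c 0)) * lcu (e0 s)
        * (lcu (D2 e0 s) * lcv (e0 s) + lcu (e0 s) * lcv (D2 e0 s))
      - (lcv (c s) - lcv (c 0)) * lcu (e0 s) * (lcv (D2 e0 s) * lcu (e0 s))); [ring|].
    rewrite Hrate. ring. }
  rewrite EU, EV. exact (lyapunov_rate _ _ _ _ _ _ H1 H2 H3).
Qed.

Lemma interval_frame_disp :
  interval (c 1) (c 0) = - (frame_disp_u 1 * frame_disp_v 1).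
Proof.
  rewrite interval_lc. unfold frame_disp_u, frame_disp_v.
  transitivity (- ((lcu (c 1) - lcu (c 0)) * (lcv (c 1) - lcv (c 0))
                   * (lcu (e0 1) * lcv (e0 1)))); [rewrite frame_lc_unit by lra|]; ring.
Qed.

(* [|X Y| <= (X^2 + Y^2) / 2], and Gronwall applied to [X^2 + Y^2 + 1] along the curve. *)
Lemma curve_interval_bound :
  Rabs (interval (c 1) (c 0)) <= (exp (4 * blength c e0 e1) - 1) / 2.
Proof.
  set (X := frame_disp_u). set (Y := frame_disp_v).
  set (f := fun s => X s ^ 2 + Y s ^ 2 + 1).
  set (K := fun s => 4 * RInt (fun u => sqrt (Gsq c e0 e1 u)) 0 s).
  assert (Hf : forall s, is_derive f s
                 (2 * (X s * frame_disp_u_rate s + Y s * frame_disp_v_rate s))).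
  { intros s. assert (HX := is_derive_frame_disp_u s). assert (HY := is_derive_frame_disp_v s).
    unfold f. auto_derive.
    - split; [eexists; exact HX | split; [eexists; exact HY | easy]].
    - change (fun x : R => X x) with X. change (fun x : R => Y x) with Y.
      rewrite (is_derive_unique X _ _ HX), (is_derive_unique Y _ _ HY). ring. }
  assert (HK : forall s, is_derive K s (4 * sqrt (Gsq c e0 e1 s))).
  { intros s. apply (is_derive_scal (fun s => RInt (fun u => sqrt (Gsq c e0 e1 u)) 0 s)).
    apply (is_derive_RInt (fun u => sqrt (Gsq c e0 e1 u)) _ 0); [|apply Gsq_sqrt_continuous].
    apply filter_forall. intros b. apply (RInt_correct (V := R_CompleteNormedModule)).
    apply ex_RInt_continuous.
    intros u _. apply Gsq_sqrt_continuous. }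
  assert (Hgron : f 1 <= f 0 * exp (K 1 - K 0)).
  { apply (gronwall_unit f _ K _ (fun s _ => Hf s) (fun s _ => HK s)).
    intros s Hs. pose proof (frame_disp_rate_bound s Hs). unfold f, X, Y. lra. }
  assert (Hf0 : f 0 = 1) by (unfold f, X, Y, frame_disp_u, frame_disp_v; ring).
  assert (HK0 : K 0 = 0) by (unfold K; rewrite RInt_point; apply Rmult_0_r).
  rewrite Hf0, HK0, Rminus_0_r, Rmult_1_l in Hgron.
  unfold K, f in Hgron. fold (blength c e0 e1) in Hgron.
  rewrite interval_frame_disp, Rabs_Ropp, Rabs_mult. fold X Y.
  pose proof (pow2_ge_0 (Rabs (X 1) - Rabs (Y 1))).
  rewrite <- (pow2_abs (X 1)), <- (pow2_abs (Y 1)) in Hgron. lra.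
Qed.

Lemma blength_nonneg : 0 <= blength c e0 e1.
Proof.
  apply RInt_ge_0; [lra | | intros; apply sqrt_pos].
  apply (ex_RInt_continuous (V := R_CompleteNormedModule)). intros u _. apply Gsq_sqrt_continuous.
Qed.

End CurveEstimate.

(** * Null segments *)

Lemma C1_affine (f : R -> R) a b : (forall s, f s = a + s * b) ->
  Defs.C1 f /\ forall s, Derive f s = b.
Proof.
  intros Hf.
  assert (HD : forall s, is_derive f s b).
  { intros s. apply (is_derive_ext (fun u => a + u * b)); [intros; symmetry; apply Hf|].
    auto_derive; [easy | ring]. }
  assert (HD' : forall s, Derive f s = b) by (intros; apply is_derive_unique, HD).
  split; [split|]; auto.
  - intros s. exists b. apply HD.
  - intros s. apply (continuous_ext (fun _ => b)); [intros; symmetry; apply HD'|].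
    apply continuous_const.
Qed.

Definition segment (P Q : R * R) (s : R) : R * R :=
  (fst P + s * (fst Q - fst P), snd P + s * (snd Q - snd P)).

Lemma segment_0 P Q : segment P Q 0 = P.
Proof. destruct P; unfold segment; simpl; f_equal; ring. Qed.

Lemma segment_1 P Q : segment P Q 1 = Q.
Proof. destruct Q; unfold segment; simpl; f_equal; ring. Qed.

Lemma InMplus_segment P Q s : InMplus P -> InMplus Q -> 0 <= s <= 1 -> InMplus (segment P Q s).
Proof.
  unfold InMplus, segment; simpl; intros HP HQ Hs.
  replace (fst P + s * (fst Q - fst P) + (snd P + s * (snd Q - snd P)))
    with ((1 - s) * (fst P + snd P) + s * (fst Q + snd Q)) by ring.
  destruct (Req_dec s 0) as [->|Hs0]; [lra|]. nra.
Qed.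

Lemma segment_regular P Q : C1_2 (segment P Q) /\ C1_2 (D2 (segment P Q)) /\
  (forall s, D2 (segment P Q) s = vsub Q P) /\ (forall s, D2 (D2 (segment P Q)) s = (0, 0)).
Proof.
  destruct (C1_affine (fun s => fst (segment P Q s)) (fst P) (fst Q - fst P)) as [H1 D1];
    [reflexivity|].
  destruct (C1_affine (fun s => snd (segment P Q s)) (snd P) (snd Q - snd P)) as [H2 D2'];
    [reflexivity|].
  destruct (C1_affine (fun s => fst (D2 (segment P Q) s)) (fst Q - fst P) 0) as [H3 D3];
    [intros; unfold D2; simpl; rewrite D1; ring|].
  destruct (C1_affine (fun s => snd (D2 (segment P Q) s)) (snd Q - snd P) 0) as [H4 D4];
    [intros; unfold D2; simpl; rewrite D2'; ring|].
  split; [split; auto | split; [split; auto | split]].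
  - intros s. unfold D2, vsub. rewrite D1, D2'. reflexivity.
  - intros s. unfold D2 at 1. rewrite D3, D4. reflexivity.
Qed.

Lemma null_geodesic_segment P Q :
  InMplus P -> InMplus Q -> interval Q P = 0 -> null_geodesic (segment P Q).
Proof.
  intros HP HQ Hnull. destruct (segment_regular P Q) as [H1 [H2 [HD HDD]]].
  split; [exact H1 | split; [exact H2 |]].
  intros s Hs. rewrite HD. split; [apply InMplus_segment; auto | split; [apply HDD | exact Hnull]].
Qed.

Lemma increment_of_Derive2_zero (f : R -> R) : Defs.C1 f -> Defs.C1 (Derive f) ->
  (forall s, 0 <= s <= 1 -> Derive (Derive f) s = 0) -> f 1 - f 0 = Derive f 0.
Proof.
  intros [Hf _] [Hdf _] H0.
  assert (HD : forall s, 0 <= s <= 1 -> Derive f s = Derive f 0).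
  { intros s Hs. destruct (Req_dec s 0) as [->|Hs0]; [reflexivity|].
    destruct (MVT_cor2 (Derive f) (fun _ => 0) 0 s ltac:(lra)) as [z [Hz Hz']].
    { intros z Hz. apply is_derive_Reals. rewrite <- (H0 z ltac:(lra)). apply Derive_correct, Hdf. }
    lra. }
  destruct (MVT_cor2 f (Derive f) 0 1 ltac:(lra)) as [z [Hz Hz']].
  { intros z Hz. apply is_derive_Reals, Derive_correct, Hf. }
  rewrite Hz, HD by lra. ring.
Qed.

Lemma null_geodesic_interval g : null_geodesic g -> interval (g 1) (g 0) = 0.
Proof.
  intros [[Hg1 Hg2] [[Hd1 Hd2] Hg]].
  assert (E : vsub (g 1) (g 0) = D2 g 0).
  { unfold vsub, D2. f_equal.
    - apply (increment_of_Derive2_zero (fun u => fst (g u)) Hg1 Hd1).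
      intros s Hs. exact (f_equal fst (proj1 (proj2 (Hg s Hs)))).
    - apply (increment_of_Derive2_zero (fun u => snd (g u)) Hg2 Hd2).
      intros s Hs. exact (f_equal snd (proj1 (proj2 (Hg s Hs)))). }
  unfold interval. rewrite E. apply (Hg 0). lra.
Qed.

Lemma Np_iff_null_lift xi0 p q : InMplus p -> InMplus q ->
  (Np xi0 p q <-> exists m : Z, interval (deck xi0 m q) p = 0).
Proof.
  intros Hp Hq. split.
  - intros [g [j [k [Hg [H0 H1]]]]]. exists (k - j)%Z.
    rewrite <- interval_deck, <- H0, <- H1. apply null_geodesic_interval, Hg.
  - intros [m Hm]. exists (segment p (deck xi0 m q)), 0%Z, m.
    split; [apply null_geodesic_segment; auto using InMplus_deck|].
    rewrite segment_0, segment_1, deck_0. auto.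
Qed.

(** * Curves of small b-length *)

Lemma Glb_Rbar_eq_0_iff (E : R -> Prop) : (forall l, E l -> 0 <= l) ->
  (Glb_Rbar E = Finite 0 <-> forall e, 0 < e -> exists l, E l /\ l < e).
Proof.
  intros Hnn. split.
  - intros HG e He. apply NNPP. intros Hnone.
    destruct (Glb_Rbar_correct E) as [_ Hglb]. rewrite HG in Hglb.
    assert (Hlb : is_lb_Rbar E (Finite e)).
    { intros x Hx. simpl. apply Rnot_lt_le. intros Hlt. apply Hnone. eauto. }
    specialize (Hglb _ Hlb). simpl in Hglb. lra.
  - intros Hsmall. apply is_glb_Rbar_unique. split.
    + intros x Hx. apply Hnn, Hx.
    + intros [b| |] Hb; simpl; auto.
      * apply Rnot_lt_le. intros Hlt. destruct (Hsmall b Hlt) as [x [Hx Hxb]].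
        specialize (Hb x Hx). simpl in Hb. lra.
      * destruct (Hsmall 1 ltac:(lra)) as [x [Hx _]]. exact (Hb x Hx).
Qed.

Lemma calN_iff_short_curves xi0 p q : calN xi0 p q <->
  forall e, 0 < e -> exists (c e0 e1 : R -> R * R) (j k : Z),
    OInMplus_curve c e0 e1 /\ c 0 = deck xi0 j p /\ c 1 = deck xi0 k q /\
    blength c e0 e1 < e.
Proof.
  unfold calN, dtilde. rewrite Glb_Rbar_eq_0_iff.
  - split; intros Hsmall e He.
    + destruct (Hsmall e He) as [l [[c [e0 [e1 [j [k [Hmu [H0 [H1 ->]]]]]]]] Hlt]].
      exists c, e0, e1, j, k. auto.
    + destruct (Hsmall e He) as [c [e0 [e1 [j [k [Hmu [H0 [H1 Hlt]]]]]]]].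
      exists (blength c e0 e1). split; [exists c, e0, e1, j, k|]; auto.
  - intros l [c [e0 [e1 [j [k [Hmu [_ [_ ->]]]]]]]]. apply blength_nonneg, Hmu.
Qed.

(* [a] and [b] below are the cosh and sinh of the rapidity [- ln f]: the frame moving along
   [d] with that rapidity sees the null vector [d] redshifted by the factor [f]. *)
Lemma null_vector_frame d f : 0 < f -> eta d d = 0 ->
  exists e0 e1, frame_ok e0 e1 /\ (- eta d e0) ^ 2 + (eta d e1) ^ 2 = 2 * fst d ^ 2 * f ^ 2.
Proof.
  destruct d as [d1 d2]. unfold eta; simpl. intros Hf Hnull.
  assert (Hsg : exists sg, sg * sg = 1 /\ d2 = sg * d1).
  { assert (Hfac : (d2 - d1) * (d2 + d1) = 0) by lra.
    apply Rmult_integral in Hfac. destruct Hfac.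
    - exists 1. split; lra.
    - exists (-1). split; lra. }
  destruct Hsg as [sg [Hsg ->]].
  set (a := (/ f + f) / 2). set (b := (/ f - f) / 2).
  assert (Hab : (a + b) * (a - b) = 1) by (unfold a, b; field; lra).
  assert (Hamb : a - b = f) by (unfold a, b; field; lra).
  exists (a, sg * b), (sg * b, a). unfold frame_ok, eta; simpl. split; [split; [|split]|].
  - transitivity (- ((a + b) * (a - b)) + (sg * sg - 1) * b * b); [ring|].
    rewrite Hab, Hsg. ring.
  - transitivity ((a + b) * (a - b) + (1 - sg * sg) * b * b); [ring|].
    rewrite Hab, Hsg. ring.
  - ring.
  - transitivity ((d1 * (a - b) + d1 * (1 - sg * sg) * b) ^ 2 + (sg * d1 * (a - b)) ^ 2);
      [ring|].
    rewrite Hamb, Hsg. transitivity ((1 + sg * sg) * d1 ^ 2 * f ^ 2); [ring|].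
    rewrite Hsg. ring.
Qed.

Lemma OInMplus_segment P Q e0 e1 : InMplus P -> InMplus Q -> frame_ok e0 e1 ->
  OInMplus_curve (segment P Q) (fun _ => e0) (fun _ => e1).
Proof.
  intros HP HQ Hfr. destruct (segment_regular P Q) as [Hc _].
  assert (Hconst : forall e : R * R, C1_2 (fun _ => e)).
  { intros e. split; [apply (C1_affine _ (fst e) 0) | apply (C1_affine _ (snd e) 0)];
      intros; ring. }
  split; [exact Hc | split; [apply Hconst | split; [apply Hconst |]]].
  intros s Hs. split; [apply InMplus_segment|]; auto.
Qed.

Lemma blength_segment P Q e0 e1 : blength (segment P Q) (fun _ => e0) (fun _ => e1)
  = sqrt ((- eta (vsub Q P) e0) ^ 2 + (eta (vsub Q P) e1) ^ 2).
Proof.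
  destruct (segment_regular P Q) as [_ [_ [HD _]]].
  unfold blength.
  rewrite (RInt_ext _ (fun _ => sqrt ((- eta (vsub Q P) e0) ^ 2 + (eta (vsub Q P) e1) ^ 2))).
  - rewrite RInt_const. unfold scal; simpl. unfold mult; simpl. ring.
  - intros s _. unfold Gsq, theta0, theta1, omega. rewrite HD. unfold D2. rewrite !Derive_const.
    f_equal. unfold eta; simpl. ring.
Qed.

Lemma calN_of_null_lift xi0 p q : InMplus p -> InMplus q ->
  (exists m : Z, interval (deck xi0 m q) p = 0) -> calN xi0 p q.
Proof.
  intros Hp Hq [m Hm]. apply calN_iff_short_curves. intros e He.
  set (Q := deck xi0 m q) in Hm. set (d := vsub Q p).
  set (A := Rabs (fst d)). assert (HA : 0 <= A) by apply Rabs_pos.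
  set (f := e / (2 * (A + 1))).
  assert (Hf : f * (2 * (A + 1)) = e) by (unfold f; field; lra).
  assert (Hf0 : 0 < f) by (unfold f; apply Rdiv_lt_0_compat; lra).
  destruct (null_vector_frame d f Hf0 Hm) as [e0 [e1 [Hfr Hlen]]].
  exists (segment p Q), (fun _ => e0), (fun _ => e1), 0%Z, m.
  split; [apply OInMplus_segment; [exact Hp | apply InMplus_deck, Hq | exact Hfr]|].
  rewrite segment_0, segment_1, deck_0, blength_segment. fold d. rewrite Hlen.
  split; [reflexivity | split; [reflexivity|]].
  rewrite <- (sqrt_pow2 e) by lra. apply sqrt_lt_1_alt.
  rewrite <- (pow2_abs (fst d)). fold A. split; nra.
Qed.

Lemma null_lift_of_calN xi0 p q : 0 < xi0 -> InMplus p -> InMplus q ->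
  calN xi0 p q -> exists m : Z, interval (deck xi0 m q) p = 0.
Proof.
  intros Hxi Hp Hq HN. rewrite calN_iff_short_curves in HN.
  destruct (deck_gap_vanishes xi0 (lcu q) (lcu p) (lcv q) (lcv p) Hxi Hq Hp) as [m Hm].
  - intros eps Heps.
    set (L := ln (1 + 2 * eps) / 4).
    assert (HL : 0 < L).
    { unfold L. apply Rdiv_lt_0_compat; [|lra]. rewrite <- ln_1. apply ln_increasing; lra. }
    assert (HexpL : exp (4 * L) = 1 + 2 * eps).
    { unfold L. replace (4 * (ln (1 + 2 * eps) / 4)) with (ln (1 + 2 * eps)) by field.
      apply exp_ln. lra. }
    destruct (HN L HL) as [c [e0 [e1 [j [k [Hmu [H0 [H1 Hlt]]]]]]]].
    exists (k - j)%Z.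
    assert (Hbound := curve_interval_bound c e0 e1 Hmu).
    rewrite H0, H1, interval_deck, interval_deck_lc, Rabs_Ropp in Hbound.
    assert (exp (4 * blength c e0 e1) < exp (4 * L)) by (apply exp_increasing; lra).
    lra.
  - exists m. rewrite interval_deck_lc, Hm. apply Ropp_0.
Qed.

Theorem mainTheorem9 (xi0 : R) (hxi0 : 0 < xi0) (p q : R * R) :
  InMplus p -> InMplus q -> (calN xi0 p q <-> Np xi0 p q).
Proof.
  intros Hp Hq. rewrite Np_iff_null_lift by assumption. split.
  - apply null_lift_of_calN; assumption.
  - apply calN_of_null_lift; assumption.
Qed.
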